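(* Let $x_0\in\mathbb{R}\cup\{+\infty\}$, $T<x_0$, $I:=[T,x_0)$, and let $\phi_1,\phi_2\in AC^1(I)$ satisfy $\phi_2(x)=o(\phi_1(x))$ as $x\to x_0$, $\phi_1(x)\neq0$, $\phi_2(x)\neq0$ and $W(x):=W(\phi_1,\phi_2;x)\neq0$ for all $x\in I$. Let $\phi\in\mathrm{span}(\phi_1,\phi_2)$ be strictly positive on a left-sided neighborhood $J\subset I$ of $x_0$, and consider the factorization $$L[u]=\frac{W(x)}{\phi(x)}\Big[\frac{\phi(x)^2}{W(x)}\Big(\frac{u}{\phi(x)}\Big)'\Big]'\quad\text{on }J.$$ This factorization is canonical of type (I) at $x_0$ (i.e. $\int^{x_0}W(t)\phi(t)^{-2}\,dt$ diverges) if and only if $\phi(x)\sim c\,\phi_2(x)$ as $x\to x_0$ for some constant $c\neq0$; and it is canonical of type (II) at $x_0$ (i.e. $\int^{x_0}W(t)\phi(t)^{-2}\,dt$ converges) if and only if $\phi(x)\sim c\,\phi_1(x)$ as $x\to x_0$ for some constant $c\neq0$. Moreover $\phi(x)\sim c\,\phi_2(x)$ as $x\to x_0$ occurs if and only if $\phi\equiv c\,\phi_2$ on $I$; hence on a fixed left-sided neighborhood of $x_0$ there is, up to constant factors, only one canonical factorization of type (I) at $x_0$.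
   Context: $AC^1(I)$: $C^1$ functions on $I$ whose derivative is absolutely continuous on every compact subinterval of $I$. $W(g,h;x):=g(x)h'(x)-g'(x)h(x)$. $L$ is the unique operator $L[u]=u''+a_1(x)u'+a_2(x)u$ with locally integrable coefficients whose kernel is $\mathrm{span}(\phi_1,\phi_2)$. A factorization $L[u]=p_2[p_1(p_0u)']'$ with nowhere-vanishing $p_i$ is called canonical of type (I), resp. type (II), at $x_0$ according as $\int^{x_0}1/p_1$ diverges, resp. converges; in the displayed factorization $p_1=\phi^2/W$. Limits are as $x\to x_0^-$. *)

From Stdlib Require Import Reals.
From Coquelicot Require Import Coquelicot.
Open Scope R_scope.

Definition Ivl (T : R) (x0 : Rbar) (x : R) : Prop := T <= x /\ Rbar_lt x x0.

Definition at_left_Rbar (x0 : Rbar) : (R -> Prop) -> Prop :=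
  match x0 with
  | Finite r => at_left r
  | _ => Rbar_locally x0
  end.

Fixpoint sumR (f : nat -> R) (n : nat) : R :=
  match n with O => 0 | S k => sumR f k + f k end.

Definition abs_cont_on (g : R -> R) (c d : R) : Prop :=
  forall eps, 0 < eps -> exists delta, 0 < delta /\
    forall (n : nat) (u v : nat -> R),
      (forall i, (i < n)%nat -> c <= u i /\ u i <= v i /\ v i <= d) ->
      (forall i j, (i < j)%nat -> (j < n)%nat -> v i <= u j) ->
      sumR (fun i => v i - u i) n < delta ->
      sumR (fun i => Rabs (g (v i) - g (u i))) n < eps.

(* df is the derivative of f at x, relative to the set D (one-sided at endpoints) *)
Definition derive_within (D : R -> Prop) (f df : R -> R) (x : R) : Prop :=
  filterlim (fun y => (f y - f x) / (y - x))
            (within (fun y => D y /\ y <> x) (locally x)) (locally (df x)).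

Definition AC1 (D : R -> Prop) (f df : R -> R) : Prop :=
  (forall x, D x -> derive_within D f df x) /\
  (forall x, D x -> filterlim df (within D (locally x)) (locally (df x))) /\
  (forall c d, D c -> D d -> c <= d -> abs_cont_on df c d).

Definition Wr (g dg h dh : R -> R) (x : R) : R := g x * dh x - dg x * h x.

Definition asymp_equiv (x0 : Rbar) (f g : R -> R) : Prop :=
  filterlim (fun x => f x / g x) (at_left_Rbar x0) (locally 1).

Definition little_o (x0 : Rbar) (f g : R -> R) : Prop :=
  filterlim (fun x => f x / g x) (at_left_Rbar x0) (locally 0).

Definition improper_conv (f : R -> R) (a : R) (x0 : Rbar) : Prop :=
  exists l : R, filterlim (fun x => RInt f a x) (at_left_Rbar x0) (locally l).

(* Factorization with p1 = phi^2 / W on J = [a, x0):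
   type (I) iff int^{x0} 1/p1 = int^{x0} W/phi^2 diverges, type (II) iff converges. *)
Definition canonical_typeI (W phi : R -> R) (a : R) (x0 : Rbar) : Prop :=
  ~ improper_conv (fun t => W t / (phi t) ^ 2) a x0.
Definition canonical_typeII (W phi : R -> R) (a : R) (x0 : Rbar) : Prop :=
  improper_conv (fun t => W t / (phi t) ^ 2) a x0.

From Stdlib Require Import Reals Lra.
From Coquelicot Require Import Coquelicot.
Open Scope R_scope.

(* With [phi = alpha phi1 + beta phi2] and [G(x) = int_a^x W / phi^2], the
   identity [(psi / phi)' = (alpha v - beta u) W / phi^2] for
   [psi = u phi1 + v phi2] computes [G] explicitly.  If [alpha <> 0], taking
   [psi = phi2] gives [alpha G = phi2 / phi + const], and [phi2 / phi -> 0]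
   because [phi2 = o(phi1)]: type (II).  If [alpha = 0], taking [psi = phi1]
   gives [beta G = const - phi1 / (beta phi2)], which diverges: type (I).
   On the other side, [phi ~ c phi1] forces [alpha = c] and [phi ~ c phi2]
   forces [alpha = 0, beta = c], so everything reduces to whether [alpha]
   vanishes. *)

Instance at_left_Rbar_proper (x0 : Rbar) : ProperFilter (at_left_Rbar x0).
Proof.
  destruct x0; simpl;
    [apply at_left_proper_filter | apply Rbar_locally_filter | apply Rbar_locally_filter].
Qed.

Instance at_left_Rbar_filter (x0 : Rbar) : Filter (at_left_Rbar x0).
Proof. apply at_left_Rbar_proper. Qed.

Lemma at_left_Rbar_ge (x0 : Rbar) (a : R) :
  Rbar_lt a x0 -> at_left_Rbar x0 (fun x => a <= x /\ Rbar_lt x x0).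
Proof.
  destruct x0 as [r| |]; simpl; intros H; [|exists a; intros; split; [lra|exact I]|easy].
  assert (Hr : 0 < r - a) by lra.
  exists (mkposreal _ Hr). intros y Hy Hyr. simpl.
  apply Rabs_def2 in Hy. unfold minus, plus, opp in Hy; simpl in Hy. lra.
Qed.

Section FilterLimits.
Context {U : Type} {F : (U -> Prop) -> Prop} {FF : Filter F}.

Lemma filterlim_fun_plus (f g : U -> R) (l m : R) :
  filterlim f F (locally l) -> filterlim g F (locally m) ->
  filterlim (fun x => f x + g x) F (locally (l + m)).
Proof. intros Hf Hg. exact (filterlim_comp_2 f g Rplus Hf Hg (filterlim_plus l m)). Qed.

Lemma filterlim_fun_mult (f g : U -> R) (l m : R) :
  filterlim f F (locally l) -> filterlim g F (locally m) ->
  filterlim (fun x => f x * g x) F (locally (l * m)).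
Proof. intros Hf Hg. exact (filterlim_comp_2 f g Rmult Hf Hg (filterlim_mult l m)). Qed.

Lemma filterlim_fun_inv (f : U -> R) (l : R) :
  l <> 0 -> filterlim f F (locally l) -> filterlim (fun x => / f x) F (locally (/ l)).
Proof. intros Hl Hf. exact (filterlim_comp _ _ _ f Rinv F _ _ Hf (continuous_Rinv l Hl)). Qed.

End FilterLimits.

Lemma filterlim_R_unique {U : Type} {F : (U -> Prop) -> Prop} {FF : ProperFilter F}
  (f : U -> R) (l m : R) :
  filterlim f F (locally l) -> filterlim f F (locally m) -> l = m.
Proof. exact (filterlim_locally_unique (K := R_AbsRing) (V := R_NormedModule) f l m). Qed.

Lemma asymp_equiv_of_eventually_eq (x0 : Rbar) (f g : R -> R) :
  at_left_Rbar x0 (fun x => f x = g x /\ g x <> 0) -> asymp_equiv x0 f g.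
Proof.
  intros H. apply (filterlim_ext_loc (fun _ => 1)); [|apply filterlim_const].
  eapply filter_imp; [|exact H]. intros x [E N]. rewrite E. field. exact N.
Qed.

(* Turns the one-sided derivative at [a] into a two-sided one, as required by
   [is_RInt_derive]. *)
Definition tangent_ext (f df : R -> R) (a y : R) : R :=
  if Rle_dec a y then f y else f a + df a * (y - a).

Section TangentExtension.
Context {T : R} {x0 : Rbar} {f df : R -> R} {a : R}.
Hypotheses (Hf : AC1 (Ivl T x0) f df) (Ta : T <= a).

Lemma tangent_ext_is_derive (y : R) :
  a <= y -> Rbar_lt y x0 -> is_derive (tangent_ext f df a) y (df y).
Proof.
  intros ay yx. apply is_derive_Reals. intros eps Heps.
  destruct Hf as [Hd _].
  destruct (Hd y (conj (Rle_trans _ _ _ Ta ay) yx) _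
              (locally_ball (df y) (mkposreal eps Heps))) as [d1 H1].
  destruct (open_Rbar_lt' y x0 yx) as [d2 H2].
  assert (Hright : forall h, h <> 0 -> Rabs h < Rmin d1 d2 -> a <= y + h ->
    Rabs ((tangent_ext f df a (y + h) - tangent_ext f df a y) / h - df y) < eps).
  { intros h hn hd ah. unfold tangent_ext.
    destruct (Rle_dec a (y + h)); [|lra]. destruct (Rle_dec a y); [|lra].
    assert (hd1 : Rabs (y + h - y) < d1)
      by (replace (y + h - y) with h by ring; exact (Rlt_le_trans _ _ _ hd (Rmin_l _ _))).
    assert (hd2 : Rabs (y + h - y) < d2)
      by (replace (y + h - y) with h by ring; exact (Rlt_le_trans _ _ _ hd (Rmin_r _ _))).
    replace h with (y + h - y) at 2 by ring.
    apply (H1 (y + h) hd1). split; [split; [lra|exact (H2 _ hd2)] | lra]. }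
  assert (Hd12 : 0 < Rmin d1 d2) by (apply Rmin_glb_lt; apply cond_pos).
  destruct (Rle_lt_or_eq_dec a y ay) as [Hlt| <-].
  - assert (Hdy : 0 < Rmin (Rmin d1 d2) (y - a)) by (apply Rmin_glb_lt; lra).
    exists (mkposreal _ Hdy). intros h hn hd. simpl in hd.
    apply Hright; [exact hn|exact (Rlt_le_trans _ _ _ hd (Rmin_l _ _))|].
    assert (Hh := Rlt_le_trans _ _ _ hd (Rmin_r _ _)). apply Rabs_def2 in Hh. lra.
  - exists (mkposreal _ Hd12). intros h hn hd.
    destruct (Rle_dec a (a + h)) as [ah|ah]; [exact (Hright h hn hd ah)|].
    unfold tangent_ext. destruct (Rle_dec a (a + h)); [lra|]. destruct (Rle_dec a a); [|lra].
    replace ((f a + df a * (a + h - a) - f a) / h - df a) with 0 by (field; exact hn).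
    rewrite Rabs_R0. exact Heps.
Qed.

Lemma continuous_comp_Rmax (y : R) :
  a <= y -> Rbar_lt y x0 -> continuous (fun z => df (Rmax a z)) y.
Proof.
  intros ay yx. destruct Hf as [_ [Hc _]].
  assert (Hmax : filterlim (Rmax a) (locally y) (within (Ivl T x0) (locally y))).
  { intros P [e He]. destruct (open_Rbar_lt' y x0 yx) as [d Hd].
    assert (Hed : 0 < Rmin e d) by (apply Rmin_glb_lt; apply cond_pos).
    exists (mkposreal _ Hed). intros z Hz. simpl in Hz.
    assert (Hze : Rabs (z - y) < e) by exact (Rlt_le_trans _ _ _ Hz (Rmin_l _ _)).
    assert (Hzd := Rlt_le_trans _ _ _ Hz (Rmin_r _ _)).
    apply He.
    - change (Rabs (Rmax a z - y) < e). unfold Rmax. destruct (Rle_dec a z); [exact Hze|].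
      apply Rabs_def2 in Hze. apply Rabs_def1; lra.
    - split; [exact (Rle_trans _ _ _ Ta (Rmax_l a z))|].
      unfold Rmax. destruct (Rle_dec a z); [exact (Hd z Hzd)|].
      exact (Rbar_le_lt_trans a y x0 ay yx). }
  unfold continuous. rewrite (Rmax_right a y ay).
  exact (filterlim_comp _ _ _ (Rmax a) df _ _ _ Hmax (Hc y (conj (Rle_trans _ _ _ Ta ay) yx))).
Qed.

Lemma C1_extension_left :
  exists g dg : R -> R, forall y, a <= y -> Rbar_lt y x0 ->
    g y = f y /\ dg y = df y /\ is_derive g y (dg y) /\ continuous dg y.
Proof.
  exists (tangent_ext f df a), (fun z => df (Rmax a z)). intros y ay yx.
  rewrite (Rmax_right a y ay).
  split; [unfold tangent_ext; destruct (Rle_dec a y); [reflexivity|lra]|].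
  split; [reflexivity|].
  split; [exact (tangent_ext_is_derive y ay yx) | exact (continuous_comp_Rmax y ay yx)].
Qed.

End TangentExtension.

Lemma is_RInt_quotient_derive (g dg h dh : R -> R) (a b : R) :
  a <= b ->
  (forall t, a <= t <= b -> is_derive g t (dg t) /\ is_derive h t (dh t) /\
     continuous dg t /\ continuous dh t /\ h t <> 0) ->
  is_RInt (fun t => (dg t * h t - g t * dh t) / h t ^ 2) a b (g b / h b - g a / h a).
Proof.
  intros ab Hgh.
  apply (is_RInt_derive (fun t => g t / h t)); rewrite Rmin_left, Rmax_right by exact ab;
    intros t Ht; destruct (Hgh t Ht) as (Dg & Dh & Cdg & Cdh & Nh).
  - exact (is_derive_div g h t _ _ Dg Dh Nh).
  - assert (Cg : continuity_pt g t)
      by exact (proj2 (continuity_pt_filterlim g t) (ex_derive_continuous g t (ex_intro _ _ Dg))).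
    assert (Ch : continuity_pt h t)
      by exact (proj2 (continuity_pt_filterlim h t) (ex_derive_continuous h t (ex_intro _ _ Dh))).
    apply continuity_pt_filterlim in Cdg, Cdh. apply continuity_pt_filterlim.
    apply continuity_pt_div; [| |exact (pow_nonzero _ 2 Nh)].
    + apply continuity_pt_minus; apply continuity_pt_mult; assumption.
    + repeat apply continuity_pt_mult; try assumption.
      apply continuity_pt_const. intros ? ?. reflexivity.
Qed.

Definition lincomb (f g : R -> R) (alpha beta x : R) : R := alpha * f x + beta * g x.

Lemma is_derive_lincomb (f df g dg : R -> R) (alpha beta t : R) :
  is_derive f t (df t) -> is_derive g t (dg t) ->
  is_derive (lincomb f g alpha beta) t (lincomb df dg alpha beta t).
Proof.
  intros Hf Hg. apply is_derive_Reals. apply is_derive_Reals in Hf, Hg.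
  unfold lincomb. apply derivable_pt_lim_plus; apply derivable_pt_lim_scal; assumption.
Qed.

Lemma continuous_lincomb (f g : R -> R) (alpha beta t : R) :
  continuous f t -> continuous g t -> continuous (lincomb f g alpha beta) t.
Proof.
  intros Hf Hg. apply continuity_pt_filterlim. apply continuity_pt_filterlim in Hf, Hg.
  unfold lincomb. apply continuity_pt_plus; apply continuity_pt_scal; assumption.
Qed.

Lemma RInt_Wronskian_over_square (T : R) (x0 : Rbar) (phi1 dphi1 phi2 dphi2 : R -> R)
  (alpha beta u v a x : R) :
  AC1 (Ivl T x0) phi1 dphi1 -> AC1 (Ivl T x0) phi2 dphi2 ->
  T <= a -> a <= x -> Rbar_lt x x0 ->
  (forall t, a <= t <= x -> lincomb phi1 phi2 alpha beta t <> 0) ->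
  alpha * v - beta * u <> 0 ->
  (alpha * v - beta * u) *
    RInt (fun t => Wr phi1 dphi1 phi2 dphi2 t / lincomb phi1 phi2 alpha beta t ^ 2) a x
  = lincomb phi1 phi2 u v x / lincomb phi1 phi2 alpha beta x
    - lincomb phi1 phi2 u v a / lincomb phi1 phi2 alpha beta a.
Proof.
  intros A1 A2 Ta ax xx0 Hnz Hk.
  destruct (C1_extension_left A1 Ta) as (g1 & dg1 & E1).
  destruct (C1_extension_left A2 Ta) as (g2 & dg2 & E2).
  assert (Ext : forall t, a <= t <= x ->
    g1 t = phi1 t /\ dg1 t = dphi1 t /\ is_derive g1 t (dg1 t) /\ continuous dg1 t /\
    g2 t = phi2 t /\ dg2 t = dphi2 t /\ is_derive g2 t (dg2 t) /\ continuous dg2 t).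
  { intros t Ht. assert (tx0 : Rbar_lt t x0) by exact (Rbar_le_lt_trans t x x0 (proj2 Ht) xx0).
    destruct (E1 t (proj1 Ht) tx0) as (? & ? & ? & ?).
    destruct (E2 t (proj1 Ht) tx0) as (? & ? & ? & ?). tauto. }
  assert (HI := is_RInt_quotient_derive
    (lincomb g1 g2 u v) (lincomb dg1 dg2 u v)
    (lincomb g1 g2 alpha beta) (lincomb dg1 dg2 alpha beta) a x ax).
  lapply HI; clear HI.
  2:{ intros t Ht. destruct (Ext t Ht) as (e1 & _ & D1 & C1 & e2 & _ & D2 & C2).
      split; [apply is_derive_lincomb; assumption|].
      split; [apply is_derive_lincomb; assumption|].
      split; [apply continuous_lincomb; assumption|].
      split; [apply continuous_lincomb; assumption|].
      unfold lincomb. rewrite e1, e2. exact (Hnz t Ht). }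
  intros HI. apply (is_RInt_scal _ _ _ (/ (alpha * v - beta * u))) in HI.
  apply is_RInt_ext with
    (g := fun t => Wr phi1 dphi1 phi2 dphi2 t / lincomb phi1 phi2 alpha beta t ^ 2) in HI.
  - rewrite (is_RInt_unique _ _ _ _ HI).
    destruct (Ext a (conj (Rle_refl a) ax)) as (ea1 & _ & _ & _ & ea2 & _).
    destruct (Ext x (conj ax (Rle_refl x))) as (ex1 & _ & _ & _ & ex2 & _).
    assert (Na := Hnz a (conj (Rle_refl a) ax)). assert (Nx := Hnz x (conj ax (Rle_refl x))).
    unfold scal, lincomb in *; simpl; unfold mult; simpl.
    rewrite ea1, ea2, ex1, ex2. field. tauto.
  - rewrite Rmin_left, Rmax_right by exact ax. intros t Ht.
    destruct (Ext t (conj (Rlt_le _ _ (proj1 Ht)) (Rlt_le _ _ (proj2 Ht))))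
      as (e1 & d1 & _ & _ & e2 & d2 & _).
    assert (Nt := Hnz t (conj (Rlt_le _ _ (proj1 Ht)) (Rlt_le _ _ (proj2 Ht)))).
    unfold scal, Wr, lincomb in *; simpl; unfold mult; simpl.
    rewrite e1, d1, e2, d2. field. tauto.
Qed.

Section Asymptotics.
Context {x0 : Rbar} {phi1 phi2 : R -> R}.
Hypotheses (Ho : little_o x0 phi2 phi1)
  (Hnz : at_left_Rbar x0 (fun x => phi1 x <> 0 /\ phi2 x <> 0)).

Lemma lincomb_div_phi1_lim (alpha beta : R) :
  filterlim (fun x => lincomb phi1 phi2 alpha beta x / phi1 x)
    (at_left_Rbar x0) (locally alpha).
Proof.
  assert (L := filterlim_fun_plus _ _ _ _ (filterlim_const alpha)
                 (filterlim_fun_mult _ _ _ _ (filterlim_const beta) Ho)).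
  rewrite Rmult_0_r, Rplus_0_r in L.
  eapply filterlim_ext_loc; [|exact L].
  eapply filter_imp; [|exact Hnz]. intros x [N1 _]. unfold lincomb. field. exact N1.
Qed.

Lemma lincomb_div_c_phi1_lim (alpha beta c : R) :
  filterlim (fun x => lincomb phi1 phi2 alpha beta x / (c * phi1 x))
    (at_left_Rbar x0) (locally (alpha * / c)).
Proof.
  eapply filterlim_ext;
    [|exact (filterlim_fun_mult _ _ _ _ (lincomb_div_phi1_lim alpha beta) (filterlim_const (/ c)))].
  intros x. unfold Rdiv. rewrite Rinv_mult. ring.
Qed.

Lemma asymp_equiv_phi1_iff (alpha beta c : R) :
  c <> 0 ->
  asymp_equiv x0 (lincomb phi1 phi2 alpha beta) (fun x => c * phi1 x) <-> alpha = c.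
Proof.
  intros Hc. assert (L := lincomb_div_c_phi1_lim alpha beta c). split.
  - intros H. assert (E := filterlim_R_unique _ _ _ H L).
    apply (Rmult_eq_reg_r (/ c)); [rewrite <- E; field; exact Hc|apply Rinv_neq_0_compat, Hc].
  - intros ->. unfold asymp_equiv. rewrite <- (Rinv_r c Hc). exact L.
Qed.

Lemma asymp_equiv_phi2_iff (alpha beta c : R) :
  c <> 0 ->
  asymp_equiv x0 (lincomb phi1 phi2 alpha beta) (fun x => c * phi2 x) <->
  alpha = 0 /\ beta = c.
Proof.
  intros Hc. split.
  - intros H.
    assert (Ha : alpha = 0).
    { assert (L0 := filterlim_fun_mult _ _ _ _ Ho H).
      assert (L : filterlim (fun x => phi2 x / phi1 x *
                    (lincomb phi1 phi2 alpha beta x / (c * phi2 x)))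
                    (at_left_Rbar x0) (locally (alpha * / c))).
      { eapply filterlim_ext_loc; [|exact (lincomb_div_c_phi1_lim alpha beta c)].
        eapply filter_imp; [|exact Hnz]. intros x [N1 N2]. field. tauto. }
      assert (E := filterlim_R_unique _ _ _ L0 L).
      apply (Rmult_eq_reg_r (/ c)); [rewrite <- E; ring|apply Rinv_neq_0_compat, Hc]. }
    split; [exact Ha|]. subst alpha.
    assert (L : filterlim (fun x => lincomb phi1 phi2 0 beta x / (c * phi2 x))
                  (at_left_Rbar x0) (locally (beta / c))).
    { eapply filterlim_ext_loc; [|exact (filterlim_const (beta / c))].
      eapply filter_imp; [|exact Hnz]. intros x [_ N2]. unfold lincomb. field. tauto. }
    assert (E := filterlim_R_unique _ _ _ H L).
    apply (Rmult_eq_reg_r (/ c)); [rewrite Rinv_r by exact Hc; exact (eq_sym E)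
                                  |apply Rinv_neq_0_compat, Hc].
  - intros [-> ->]. apply asymp_equiv_of_eventually_eq.
    eapply filter_imp; [|exact Hnz]. intros x [_ N2].
    split; [unfold lincomb; ring|exact (Rmult_integral_contrapositive_currified _ _ Hc N2)].
Qed.

End Asymptotics.

Section CanonicalType.
Context {x0 : Rbar} {T : R} {phi1 dphi1 phi2 dphi2 : R -> R} {a : R}.
Hypotheses (A1 : AC1 (Ivl T x0) phi1 dphi1) (A2 : AC1 (Ivl T x0) phi2 dphi2)
  (Ho : little_o x0 phi2 phi1)
  (Hnz : at_left_Rbar x0 (fun x => phi1 x <> 0 /\ phi2 x <> 0))
  (Ta : T <= a) (ax0 : Rbar_lt a x0).

Lemma eventually_J_nonzero :
  at_left_Rbar x0 (fun x => (a <= x /\ Rbar_lt x x0) /\ (phi1 x <> 0 /\ phi2 x <> 0)).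
Proof. exact (filter_and _ _ (at_left_Rbar_ge x0 a ax0) Hnz). Qed.

Lemma positive_neq0_on_segment (f : R -> R) (x : R) :
  (forall y, a <= y -> Rbar_lt y x0 -> 0 < f y) -> Rbar_lt x x0 ->
  forall t, a <= t <= x -> f t <> 0.
Proof.
  intros Hpos xx0 t [at' tx]. apply Rgt_not_eq, Hpos; [exact at'|].
  exact (Rbar_le_lt_trans t x x0 tx xx0).
Qed.

Lemma canonical_typeII_of_alpha_neq0 (alpha beta : R) :
  (forall x, a <= x -> Rbar_lt x x0 -> 0 < lincomb phi1 phi2 alpha beta x) ->
  alpha <> 0 ->
  canonical_typeII (Wr phi1 dphi1 phi2 dphi2) (lincomb phi1 phi2 alpha beta) a x0.
Proof.
  intros Hpos Ha.
  set (C := lincomb phi1 phi2 0 1 a / lincomb phi1 phi2 alpha beta a).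
  assert (L := filterlim_fun_mult _ _ _ _
    (filterlim_fun_plus _ _ _ _
       (filterlim_fun_mult _ _ _ _ Ho (filterlim_fun_inv _ _ Ha (lincomb_div_phi1_lim Ho Hnz alpha beta)))
       (filterlim_const (- C)))
    (filterlim_const (/ alpha))).
  eexists. eapply filterlim_ext_loc; [|exact L].
  eapply filter_imp; [|exact eventually_J_nonzero]. intros x [[ax xx0] [N1 N2]].
  assert (Hk : alpha * 1 - beta * 0 <> 0) by (rewrite Rmult_1_r, Rmult_0_r, Rminus_0_r; exact Ha).
  apply (Rmult_eq_reg_l (alpha * 1 - beta * 0)); [|exact Hk].
  rewrite (RInt_Wronskian_over_square T x0 phi1 dphi1 phi2 dphi2 alpha beta 0 1 a x
             A1 A2 Ta ax xx0 (positive_neq0_on_segment _ _ Hpos xx0) Hk).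
  assert (Px := Hpos x ax xx0). assert (Pa := Hpos a (Rle_refl a) ax0).
  unfold C, lincomb in *. field. repeat split; try lra; assumption.
Qed.

(* With [psi = phi1], [beta G(x) = const - phi1 / (beta phi2)]: multiplying by
   [phi2 / phi1 -> 0] would send the constant [1 / beta] to [0] if [G]
   converged. *)
Lemma not_canonical_typeII_of_alpha_eq0 (beta : R) :
  (forall x, a <= x -> Rbar_lt x x0 -> 0 < lincomb phi1 phi2 0 beta x) ->
  ~ canonical_typeII (Wr phi1 dphi1 phi2 dphi2) (lincomb phi1 phi2 0 beta) a x0.
Proof.
  intros Hpos [l Hl].
  assert (Pa := Hpos a (Rle_refl a) ax0).
  assert (Hb : beta <> 0) by (intros ->; unfold lincomb in Pa; lra).
  assert (Na : phi2 a <> 0) by (intro E; unfold lincomb in Pa; rewrite E in Pa; lra).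
  assert (Hk : 0 * 0 - beta * 1 <> 0) by (intro E; apply Hb; lra).
  set (C := lincomb phi1 phi2 1 0 a / lincomb phi1 phi2 0 beta a).
  assert (L := filterlim_fun_mult _ _ _ _ Ho
    (filterlim_fun_plus _ _ _ _ (filterlim_const C)
       (filterlim_fun_mult _ _ _ _ (filterlim_const (0 * 0 - beta * 1)) Hl))).
  assert (Lb : filterlim
    (fun x => phi2 x / phi1 x * (C + (0 * 0 - beta * 1) *
       RInt (fun t => Wr phi1 dphi1 phi2 dphi2 t / lincomb phi1 phi2 0 beta t ^ 2) a x))
    (at_left_Rbar x0) (locally (/ beta))).
  { eapply filterlim_ext_loc; [|exact (filterlim_const (/ beta))].
    eapply filter_imp; [|exact eventually_J_nonzero]. intros x [[ax xx0] [N1 N2]].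
    rewrite (RInt_Wronskian_over_square T x0 phi1 dphi1 phi2 dphi2 0 beta 1 0 a x
               A1 A2 Ta ax xx0 (positive_neq0_on_segment _ _ Hpos xx0) Hk).
    unfold C, lincomb in *. field. repeat split; try lra; assumption. }
  apply (Rinv_neq_0_compat _ Hb). rewrite <- (filterlim_R_unique _ _ _ L Lb). ring.
Qed.

Lemma canonical_typeI_iff (alpha beta : R) :
  (forall x, a <= x -> Rbar_lt x x0 -> 0 < lincomb phi1 phi2 alpha beta x) ->
  canonical_typeI (Wr phi1 dphi1 phi2 dphi2) (lincomb phi1 phi2 alpha beta) a x0 <->
  alpha = 0.
Proof.
  intros Hpos. split.
  - intros HI. destruct (Req_dec alpha 0) as [E|E]; [exact E|].
    exfalso. exact (HI (canonical_typeII_of_alpha_neq0 alpha beta Hpos E)).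
  - intros ->. exact (not_canonical_typeII_of_alpha_eq0 beta Hpos).
Qed.

Lemma canonical_typeII_iff (alpha beta : R) :
  (forall x, a <= x -> Rbar_lt x x0 -> 0 < lincomb phi1 phi2 alpha beta x) ->
  canonical_typeII (Wr phi1 dphi1 phi2 dphi2) (lincomb phi1 phi2 alpha beta) a x0 <->
  alpha <> 0.
Proof.
  intros Hpos. split.
  - intros HII ->. exact (not_canonical_typeII_of_alpha_eq0 beta Hpos HII).
  - exact (canonical_typeII_of_alpha_neq0 alpha beta Hpos).
Qed.

End CanonicalType.

Theorem lemma3p2 (x0 : Rbar) (T : R)
  (phi1 dphi1 phi2 dphi2 : R -> R) (alpha beta a : R) :
  Rbar_lt T x0 ->
  AC1 (Ivl T x0) phi1 dphi1 ->
  AC1 (Ivl T x0) phi2 dphi2 ->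
  little_o x0 phi2 phi1 ->
  (forall x, Ivl T x0 x -> phi1 x <> 0) ->
  (forall x, Ivl T x0 x -> phi2 x <> 0) ->
  (forall x, Ivl T x0 x -> Wr phi1 dphi1 phi2 dphi2 x <> 0) ->
  T <= a -> Rbar_lt a x0 ->
  (forall x, a <= x -> Rbar_lt x x0 -> 0 < alpha * phi1 x + beta * phi2 x) ->
  let W := Wr phi1 dphi1 phi2 dphi2 in
  let phi := fun x => alpha * phi1 x + beta * phi2 x in
  (canonical_typeI W phi a x0 <->
     exists c, c <> 0 /\ asymp_equiv x0 phi (fun x => c * phi2 x)) /\
  (canonical_typeII W phi a x0 <->
     exists c, c <> 0 /\ asymp_equiv x0 phi (fun x => c * phi1 x)) /\
  (forall c, c <> 0 ->
     (asymp_equiv x0 phi (fun x => c * phi2 x) <->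
      forall x, Ivl T x0 x -> phi x = c * phi2 x)) /\
  (forall alpha' beta' : R,
     let psi := fun x => alpha' * phi1 x + beta' * phi2 x in
     (forall x, a <= x -> Rbar_lt x x0 -> 0 < psi x) ->
     canonical_typeI W phi a x0 -> canonical_typeI W psi a x0 ->
     exists k, k <> 0 /\ forall x, a <= x -> Rbar_lt x x0 -> psi x = k * phi x).
Proof.
  intros _ A1 A2 Ho N1 N2 _ Ta ax0 Hpos W phi.
  assert (HJ := at_left_Rbar_ge x0 a ax0).
  assert (HIvl : at_left_Rbar x0 (Ivl T x0))
    by (eapply filter_imp; [|exact HJ]; intros x [ax xx0]; split; [lra|exact xx0]).
  assert (Hnz : at_left_Rbar x0 (fun x => phi1 x <> 0 /\ phi2 x <> 0))
    by (eapply filter_imp; [|exact HIvl]; intros x Hx; split; [exact (N1 x Hx)|exact (N2 x Hx)]).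
  assert (beta_neq0 : forall al be,
    (forall x, a <= x -> Rbar_lt x x0 -> 0 < lincomb phi1 phi2 al be x) -> al = 0 -> be <> 0).
  { intros al be Hp -> ->. specialize (Hp a (Rle_refl a) ax0). unfold lincomb in Hp. lra. }
  split; [|split; [|split]].
  - etransitivity; [exact (canonical_typeI_iff A1 A2 Ho Hnz Ta ax0 alpha beta Hpos)|]. split.
    + intros Ha. exists beta. assert (Hb := beta_neq0 _ _ Hpos Ha).
      split; [exact Hb|]. exact (proj2 (asymp_equiv_phi2_iff Ho Hnz alpha beta beta Hb) (conj Ha eq_refl)).
    + intros (c & Hc & He). exact (proj1 (proj1 (asymp_equiv_phi2_iff Ho Hnz alpha beta c Hc) He)).
  - etransitivity; [exact (canonical_typeII_iff A1 A2 Ho Hnz Ta ax0 alpha beta Hpos)|]. split.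
    + intros Ha. exists alpha.
      split; [exact Ha|]. exact (proj2 (asymp_equiv_phi1_iff Ho Hnz alpha beta alpha Ha) eq_refl).
    + intros (c & Hc & He). rewrite (proj1 (asymp_equiv_phi1_iff Ho Hnz alpha beta c Hc) He). exact Hc.
  - intros c Hc. split.
    + intros He x _.
      destruct (proj1 (asymp_equiv_phi2_iff Ho Hnz alpha beta c Hc) He) as [-> ->].
      unfold phi. ring.
    + intros Heq. apply asymp_equiv_of_eventually_eq.
      eapply filter_imp; [|exact HIvl]. intros x Hx.
      split; [exact (Heq x Hx)|exact (Rmult_integral_contrapositive_currified _ _ Hc (N2 x Hx))].
  - intros alpha' beta' psi Hpos' HIphi HIpsi.
    apply (canonical_typeI_iff A1 A2 Ho Hnz Ta ax0 alpha beta Hpos) in HIphi.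
    apply (canonical_typeI_iff A1 A2 Ho Hnz Ta ax0 alpha' beta' Hpos') in HIpsi.
    assert (Hb := beta_neq0 _ _ Hpos HIphi). assert (Hb' := beta_neq0 _ _ Hpos' HIpsi).
    exists (beta' / beta). split; [exact (Rmult_integral_contrapositive_currified _ _ Hb' (Rinv_neq_0_compat _ Hb))|].
    intros x _ _. unfold psi, phi. rewrite HIphi, HIpsi. field. exact Hb.
Qed.
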